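(* Let $G$ be a group and let $A,B,C$ be nonempty finite subsets of $G$ with $B\subset C$ and $1\in C$. Then either $ABC=AB$ or $|ABC|\geq |A|+|B|$.
   Context: For subsets $X,Y,Z$ of a multiplicative group $G$, $XY=\{xy\mid x\in X,\ y\in Y\}$ and $XYZ=\{xyz\mid x\in X,\ y\in Y,\ z\in Z\}$. *)

From Stdlib Require Export Ensembles Finite_sets.

Record Group := {
  carrier :> Type;
  gmul : carrier -> carrier -> carrier;
  gone : carrier;
  ginv : carrier -> carrier;
  gmul_assoc : forall x y z, gmul x (gmul y z) = gmul (gmul x y) z;
  gmul_1l : forall x, gmul gone x = x;
  gmul_Vl : forall x, gmul (ginv x) x = gone
}.

Definition setmul {G : Group} (X Y : Ensemble G) : Ensemble G :=
  fun z => exists x y, In G X x /\ In G Y y /\ z = gmul G x y.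

Definition setmul3 {G : Group} (X Y Z : Ensemble G) : Ensemble G :=
  fun w => exists x y z, In G X x /\ In G Y y /\ In G Z z /\
                         w = gmul G (gmul G x y) z.

Definition nonempty {G : Group} (X : Ensemble G) : Prop := exists x, In G X x.

(* Since 1 lies in C, AB is contained in ABC.  If ABC contains some w = abc
   outside AB, put e := bc.  Then A(B u {e}) lies in ABC, the translates
   a^-1 A and (B u {e}) e^-1 both contain 1, and 1 = 1 * 1 is the only
   factorisation of 1 in their product (another one would put ae = w in AB).
   Scherk's theorem, |XY| >= |X| + |Y| - 1 whenever 1 lies in X and Y and has
   only the trivial factorisation in XY, then gives |ABC| >= |A| + |B|.

   Scherk's theorem is proved by Kemperman's transform: when X and Y share
   some g <> 1, one of (X u Xg, Y n g^-1 Y) and (X n Xg^-1, Y u gY) keeps the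
   hypotheses, shrinks the product set and increases (|X| + |Y|, |X|)
   lexicographically; the second transform is the first one computed in the
   opposite group.  When X n Y = {1}, X u Y lies in XY. *)

From HB Require Import structures.
From Stdlib Require Import ClassicalDescription Classical.
From Stdlib Require Import FunctionalExtensionality PropExtensionality.
From mathcomp Require ssreflect ssrfun ssrbool eqtype ssrnat seq zify.

Module Scherk.
Import mathcomp.boot.ssreflect mathcomp.boot.ssrfun mathcomp.boot.ssrbool.
Import mathcomp.boot.eqtype mathcomp.boot.ssrnat mathcomp.boot.seq mathcomp.zify.zify.
Set Implicit Arguments.
Unset Strict Implicit.

Local Notation "x ** y" := (gmul _ x y) (at level 40, left associativity).
Local Notation one := (gone _).
Local Notation inv := (ginv _).

(* The carrier of a group has decidable equality (classically), so that
   duplicate-free lists of group elements can be used as finite sets. *)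
Definition group_eq_dec (G : Group) : comparable (carrier G) :=
  fun x y => excluded_middle_informative (x = y).
HB.instance Definition _ (G : Group) := comparableMixin (@group_eq_dec G).

Section GroupFacts.
Variable G : Group.
Implicit Types x y : G.

Lemma mulA x y z : x ** (y ** z) = x ** y ** z. Proof. exact: gmul_assoc. Qed.
Lemma mul1g x : one ** x = x. Proof. exact: gmul_1l. Qed.
Lemma mulVg x : inv x ** x = one. Proof. exact: gmul_Vl. Qed.
Lemma mulKg x y : inv x ** (x ** y) = y. Proof. by rewrite mulA mulVg mul1g. Qed.

Lemma mulgV x : x ** inv x = one.
Proof.
have idem : (x ** inv x) ** (x ** inv x) = x ** inv x by rewrite -mulA mulKg.
by rewrite -(mulKg (x ** inv x) (x ** inv x)) idem mulVg.
Qed.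
Lemma mulg1 x : x ** one = x. Proof. by rewrite -(mulVg x) mulA mulgV mul1g. Qed.

Lemma mulgK x y : y ** x ** inv x = y. Proof. by rewrite -mulA mulgV mulg1. Qed.
Lemma mulgVK x y : y ** inv x ** x = y. Proof. by rewrite -mulA mulVg mulg1. Qed.
Lemma mulKVg x y : x ** (inv x ** y) = y. Proof. by rewrite mulA mulgV mul1g. Qed.

Lemma mulIg x : injective (fun y => x ** y).
Proof. by move=> y z e; rewrite -(mulKg x y) e mulKg. Qed.
Lemma mulgI x : injective (fun y => y ** x).
Proof. by move=> y z e; rewrite -(mulgK x y) e mulgK. Qed.

End GroupFacts.

(* The opposite group, with product x *op y := y ** x; it turns statements about
   right translations into statements about left translations. *)
Definition opp_group (G : Group) : Group := {|
  carrier := G;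
  gmul := fun x y => y ** x;
  gone := one;
  ginv := inv;
  gmul_assoc := fun x y z => esym (mulA z y x);
  gmul_1l := @mulg1 G;
  gmul_Vl := @mulgV G |}.

Section Counting.
Variable T : eqType.
Implicit Types (s l : seq T) (p q : pred T).

Lemma count_split s p q :
  count p s = count (fun z => p z && q z) s + count (fun z => p z && ~~ q z) s.
Proof. by elim: s => //= x s ->; case: (p x); case: (q x); rewrite /= ?addnS. Qed.

Lemma count_or s p q :
  count (fun z => p z || q z) s = count p s + count (fun z => q z && ~~ p z) s.
Proof. by elim: s => //= x s ->; case: (p x); case: (q x); rewrite /= ?addnS. Qed.

Lemma count_le_inj s p q (f : T -> T) : uniq s -> injective f ->
  (forall z, p z -> q (f z) /\ f z \in s) -> count p s <= count q s.
Proof.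
move=> s_uniq f_inj pq; rewrite -!size_filter -(size_map f).
apply: uniq_leq_size; first by rewrite map_inj_uniq // filter_uniq.
move=> w /mapP [z]; rewrite mem_filter => /andP [pz _] ->.
by rewrite mem_filter; case: (pq z pz) => -> ->.
Qed.

Lemma count_eq_inj s p q (f h : T -> T) : uniq s -> injective f -> injective h ->
  (forall z, p z -> q (f z) /\ f z \in s) ->
  (forall z, q z -> p (h z) /\ h z \in s) -> count p s = count q s.
Proof.
move=> s_uniq f_inj h_inj pq qp.
by apply/eqP; rewrite eqn_leq (count_le_inj s_uniq f_inj pq) (count_le_inj s_uniq h_inj qp).
Qed.

Lemma count_bij s l p (f : T -> T) : uniq s -> uniq l -> injective f ->
  (forall z, p z -> z \in s) -> (forall x, x \in l -> p (f x)) ->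
  (forall z, p z -> exists2 x, x \in l & z = f x) -> count p s = size l.
Proof.
move=> s_uniq l_uniq f_inj ps lp pl; rewrite -size_filter -(size_map f l).
apply: perm_size; apply: uniq_perm; first exact: filter_uniq.
  by rewrite map_inj_uniq.
move=> z; rewrite mem_filter; apply/andP/mapP => [[pz _]|[x xl ->]].
  by case: (pl z pz) => x xl ->; exists x.
by have pz := lp x xl; split => //; apply: ps.
Qed.

End Counting.

(* Predicates on a group H, counted inside a duplicate-free universe U. *)
Section ProductSets.
Variables (H : Group) (U : seq H).
Implicit Types (A B : pred H) (g : H).

Definition prodp A B : pred H := fun z => has (fun x => A x && B (inv x ** z)) U.

Definition scherk_hyp A B : Prop :=
  [/\ forall x y, A x -> B y -> x ** y \in U, A one, B one &
      forall x y, A x -> B y -> x ** y = one -> x = one].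

Lemma scherk_left_in A B : scherk_hyp A B -> forall x, A x -> x \in U.
Proof. by case=> prodU _ B1 _ x Ax; rewrite -(mulg1 x); apply: prodU. Qed.

Lemma scherk_right_in A B : scherk_hyp A B -> forall y, B y -> y \in U.
Proof. by case=> prodU A1 _ _ y By; rewrite -(mul1g y); apply: prodU. Qed.

Lemma prodP A B z : (forall x, A x -> x \in U) ->
  reflect (exists x y, [/\ A x, B y & z = x ** y]) (prodp A B z).
Proof.
move=> AU; apply: (iffP hasP) => [[x _ /andP [Ax Bxz]] | [x [y [Ax By ->]]]].
  by exists x, (inv x ** z); rewrite mulKVg.
by exists x; [apply: AU | rewrite Ax mulKg].
Qed.

Definition gain A g : nat := count (fun z => A (z ** inv g) && ~~ A z) U.

Definition right_union A g : pred H := fun z => A z || A (z ** inv g).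
Definition left_meet B g : pred H := fun z => B z && B (g ** z).

End ProductSets.

Section Opposite.
Variables (H : Group) (U : seq H) (A B : pred H).

Lemma scherk_hyp_opp : scherk_hyp U A B -> scherk_hyp (H := opp_group H) U B A.
Proof.
case=> prodU A1 B1 uniq1; split=> // y x By Ax; first exact: prodU.
by move=> xy1; move: (xy1) => /=; rewrite (uniq1 x y Ax By xy1) mul1g.
Qed.

Lemma scherk_hyp_unopp : scherk_hyp (H := opp_group H) U B A -> scherk_hyp U A B.
Proof.
case=> prodU B1 A1 uniq1; split=> // x y Ax By; first exact: prodU.
by move=> xy1; move: (xy1); rewrite (uniq1 y x By Ax xy1) mulg1.
Qed.

Lemma prodp_opp : scherk_hyp U A B ->
  prodp (H := opp_group H) U B A =1 prodp U A B.
Proof.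
move=> hAB z; have AU := scherk_left_in hAB; have BU := scherk_right_in hAB.
apply/(@prodP (opp_group H) U B A z BU)/(prodP B z AU) => [] [u [v [Xu Yv ->]]]; by exists v, u.
Qed.

End Opposite.

Section Transform.
Variables (H : Group) (U : seq H).
Hypothesis U_uniq : uniq U.
Variables (A B : pred H) (g : H).
Hypotheses (hAB : scherk_hyp U A B) (Ag : A g) (Bg : B g).

Let AU := scherk_left_in hAB.
Let BU := scherk_right_in hAB.
Let ABU : forall x y, A x -> B y -> x ** y \in U. Proof. by case: hAB. Qed.

Lemma count_right_union : count (right_union A g) U = count A U + gain U A g.
Proof. exact: count_or. Qed.

Lemma count_left_meet :
  count (left_meet B g) U + gain (H := opp_group H) U B g = count B U.
Proof.
rewrite [RHS](count_split U B (fun z => B (g ** z))); congr (_ + _).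
apply: (count_eq_inj (f := fun z => inv g ** z) (h := fun z => g ** z)) => //.
- exact: mulIg.
- exact: mulIg.
- by move=> z /andP [Bgz nBz] /=; rewrite mulKVg Bgz nBz; split => //; apply: BU.
- by move=> z /andP [Bz nBgz] /=; rewrite mulKg Bz nBgz; split => //; apply: ABU.
Qed.

(* |Ag \ A| = |A \ Ag|, and 1 lies in A \ Ag since g^-1 * g = 1 forces g = 1. *)
Lemma gain_pos : g != one -> 0 < gain U A g.
Proof.
move=> g_neq1; have [_ A1 _ uniq1] := hAB.
have transl : count (fun z => A (z ** inv g)) U = count A U.
  apply: (count_eq_inj (f := fun z => z ** inv g) (h := fun z => z ** g)) => //.
  - exact: mulgI.
  - exact: mulgI.
  - by move=> z Agz; split => //; apply: AU.
  - by move=> z Az /=; rewrite mulgK Az; split => //; apply: ABU.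
have lost : 0 < count (fun z => A z && ~~ A (z ** inv g)) U.
  rewrite -has_count; apply/hasP; exists one; first exact: AU.
  rewrite A1 mul1g /=; apply/negP => Aginv.
  have ginv1 : inv g = one := uniq1 _ _ Aginv Bg (mulVg g).
  have g1 : g = one by rewrite -(mulVg g) ginv1 mul1g.
  by rewrite g1 eqxx in g_neq1.
have sym : count (fun z => A z && A (z ** inv g)) U =
           count (fun z => A (z ** inv g) && A z) U.
  by apply: eq_count => z; rewrite andbC.
move: lost (count_split U A (fun z => A (z ** inv g))).
rewrite -transl (count_split U (fun z => A (z ** inv g)) A) sym => lost /eqP.
by rewrite eqn_add2l => /eqP eq_gain; rewrite /gain eq_gain.
Qed.

Lemma transform_hyp : scherk_hyp U (right_union A g) (left_meet B g).
Proof.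
have [_ A1 B1 uniq1] := hAB; split.
- move=> x y /orP [Ax | Axg] /andP [By Bgy]; first exact: ABU.
  by rewrite -(mulgVK g x) -mulA; apply: ABU.
- by rewrite /right_union A1.
- by rewrite /left_meet B1 mulg1.
- move=> x y /orP [Ax | Axg] /andP [By Bgy] xy1; first exact: uniq1 xy1.
  have xg1 : x ** inv g = one by apply: (uniq1 _ _ Axg Bgy); rewrite -mulA mulKg.
  have x_eq_g : x = g by rewrite -(mulgVK g x) xg1 mul1g.
  by rewrite x_eq_g; apply: (uniq1 _ y) => //; rewrite -x_eq_g.
Qed.

Lemma transform_prodp :
  subpred (prodp U (right_union A g) (left_meet B g)) (prodp U A B).
Proof.
have A'U := scherk_left_in transform_hyp.
move=> z /(prodP _ _ A'U) [x [y [/orP [Ax | Axg] /andP [By Bgy] ->]]];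
  apply/(prodP _ _ AU); first by exists x, y.
by exists (x ** inv g), (g ** y); rewrite -mulA mulKg.
Qed.

End Transform.

(* Base case of Scherk's theorem: if 1 is the only common element of A and B,
   then A u B lies in AB. *)
Lemma scherk_base (H : Group) (U : seq H) (A B : pred H) : uniq U ->
  scherk_hyp U A B ->
  ~~ has (fun g => [&& A g, B g & g != one]) U ->
  count A U + count B U <= count (prodp U A B) U + 1.
Proof.
move=> U_uniq hAB no_common; have AU := scherk_left_in hAB; have BU := scherk_right_in hAB.
rewrite -count_predUI; apply: leq_add.
  apply: sub_count => z /orP [Az | Bz]; apply/(prodP _ _ AU).
    by exists z, one; rewrite mulg1; case: hAB.
  by exists one, z; rewrite mul1g; case: hAB.
apply: (@leq_trans (count (pred1 one) U)); last by rewrite count_uniq_mem ?leq_b1.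
apply: sub_count => z /andP [Az Bz] /=; apply/negPn/negP => z_neq1.
by move/hasP: no_common; apply; exists z; [apply: AU | apply/and3P].
Qed.

Section Potential.
Variables (H : Group) (U : seq H).
Implicit Types A B : pred H.

(* A potential encoding the lexicographic order on (|A| + |B|, |A|); both
   components are bounded by the size of the universe. *)
Definition potential A B : nat :=
  (2 * size U - (count A U + count B U)) * (size U).+1 + (size U - count A U).

Lemma potential_lt A B A' B' :
  count A U + count B U <= count A' U + count B' U ->
  (count A U + count B U < count A' U + count B' U) || (count A U < count A' U) ->
  potential A' B' < potential A B.
Proof.
rewrite /potential.
by move: (count_size A U) (count_size B U) (count_size A' U) (count_size B' U) => *; nia.
Qed.

End Potential.

Theorem scherk (H : Group) (U : seq H) (A B : pred H) : uniq U ->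
  scherk_hyp U A B -> count A U + count B U <= count (prodp U A B) U + 1.
Proof.
move=> U_uniq; move: {2}(potential U A B) (erefl (potential U A B)) => n.
elim/ltn_ind: n A B => n IH A B potE hAB.
have reduce (A' B' : pred H) : scherk_hyp U A' B' -> potential U A' B' < n ->
    count A U + count B U <= count A' U + count B' U ->
    subpred (prodp U A' B') (prodp U A B) ->
    count A U + count B U <= count (prodp U A B) U + 1.
  move=> hAB' lt_pot le_size sub; apply: leq_trans le_size _.
  by apply: leq_trans (IH _ lt_pot _ _ erefl hAB') _; rewrite leq_add2r sub_count.
have [/hasP [g _ /and3P [Ag Bg g_neq1]] | no_common] :=
  boolP (has (fun g => [&& A g, B g & g != one]) U); last exact: scherk_base U_uniq hAB no_common.
have hBA := scherk_hyp_opp hAB.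
have [le_gain | lt_gain] := leqP (gain (H := opp_group H) U B g) (gain U A g).
- have cA := count_right_union U A g.
  have cB := count_left_meet U_uniq hAB Ag.
  have pos := gain_pos U_uniq hAB Bg g_neq1.
  apply: (reduce _ _ (transform_hyp hAB Ag Bg) _ _ (transform_prodp hAB Ag Bg)).
    by rewrite -potE; apply: potential_lt; lia.
  by lia.
- have cB : @count H (right_union (H := opp_group H) B g) U =
            count B U + gain (H := opp_group H) U B g :=
    count_right_union (H := opp_group H) U B g.
  have cA : @count H (left_meet (H := opp_group H) A g) U + gain U A g = count A U :=
    count_left_meet (H := opp_group H) U_uniq hBA Bg.
  have pos := gain_pos (H := opp_group H) U_uniq hBA Ag g_neq1.
  have hAB' := transform_hyp (H := opp_group H) hBA Bg Ag.
  apply: (reduce _ _ (scherk_hyp_unopp hAB')).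
  - by rewrite -potE; apply: potential_lt; lia.
  - by lia.
  - move=> z; rewrite -(prodp_opp hAB z) -(prodp_opp (scherk_hyp_unopp hAB') z).
    exact: (transform_prodp (H := opp_group H) hBA Bg Ag).
Qed.

(* If a lies in A and ae does not lie in
   AB, then |A(B u {e})| >= |A| + |B|: the sets a^-1 A and (B u {e}) e^-1
   contain 1, and 1 = 1 * 1 is the only factorisation of 1 in their product
   since any other one would write ae as an element of AB. *)
Lemma scherk_extension (G : Group) (lA lB W : seq G) (a e : G) :
  uniq lA -> uniq lB -> a \in lA ->
  (forall x y, x \in lA -> y \in e :: lB -> x ** y \in W) ->
  (forall x y, x \in lA -> y \in lB -> x ** y != a ** e) ->
  size lA + size lB <= size W.
Proof.
move=> lA_uniq lB_uniq a_in prodW ae_new.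
have e_notin : e \notin lB.
  by apply/negP => e_in; move: (ae_new a e a_in e_in); rewrite eqxx.
pose U := undup [seq inv a ** w ** inv e | w <- W].
have U_uniq : uniq U := undup_uniq _.
have in_U z : a ** z ** e \in W -> z \in U.
  move=> zW; rewrite mem_undup; apply/mapP; exists (a ** z ** e) => //.
  by rewrite -[a ** z ** e]mulA mulKg mulgK.
pose A1 : pred G := fun x => a ** x \in lA.
pose E1 : pred G := fun y => y ** e \in e :: lB.
have hyp : scherk_hyp U A1 E1.
  split.
  - move=> x y Ax Ey; apply: in_U.
    have -> : a ** (x ** y) ** e = (a ** x) ** (y ** e) by rewrite !mulA.
    exact: prodW.
  - by rewrite /A1 mulg1.
  - by rewrite /E1 mul1g mem_head.
  - move=> x y Ax; rewrite /E1 in_cons => /orP [/eqP ye | yB] xy1.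
      have y1 : y = one by rewrite -(mulgK e y) ye mulgV.
      by move: xy1; rewrite y1 mulg1.
    by move: (ae_new _ _ Ax yB); rewrite -mulA (mulA x) xy1 mul1g eqxx.
have cA : count A1 U = size lA.
  apply: (count_bij (f := fun x => inv a ** x)) => //.
  - exact: mulIg.
  - exact: scherk_left_in hyp.
  - by move=> x x_in; rewrite /A1 mulKVg.
  - by move=> z Az; exists (a ** z); rewrite ?mulKg.
have cE : count E1 U = size (e :: lB).
  apply: (count_bij (f := fun y => y ** inv e)) => //.
  - by rewrite /= e_notin.
  - exact: mulgI.
  - exact: scherk_right_in hyp.
  - by move=> y y_in; rewrite /E1 mulgVK.
  - by move=> z Ez; exists (z ** e); rewrite ?mulgK.
have sizeU : size U <= size W by rewrite (leq_trans (size_undup _)) ?size_map.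
move: (scherk U_uniq hyp) (count_size (prodp U A1 E1) U).
rewrite cA cE /= addnS addn1 ltnS => bound countU.
exact: leq_trans bound (leq_trans countU sizeU).
Qed.

Section FiniteEnsembles.
Variable T : eqType.

Lemma finite_list (X : Ensemble T) : Finite T X ->
  exists l : seq T, uniq l /\ forall x, In T X x <-> x \in l.
Proof.
elim=> [|Y _ [l [l_uniq memY]] x x_notin].
  by exists [::]; split => // x; split => [[]|].
exists (x :: l); split; first by rewrite /= l_uniq andbT; apply/negP => /memY.
move=> z; rewrite in_cons; split.
  by case=> [z' /memY -> | z' []]; rewrite ?eqxx ?orbT.
by case/orP => [/eqP -> | /memY Yz]; [right | left].
Qed.

Lemma list_cardinal (l : seq T) (X : Ensemble T) : uniq l ->
  (forall x, In T X x <-> x \in l) -> cardinal T X (size l).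
Proof.
elim: l X => [|x l IH] X l_uniq memX.
  have -> : X = Empty_set T.
    apply: functional_extensionality => z; apply: propositional_extensionality.
    by split => [/memX | []].
  exact: card_empty.
move: l_uniq => /= /andP [x_notin l_uniq].
have -> : X = Add T (fun z => z \in l) x.
  apply: functional_extensionality => z; apply: propositional_extensionality.
  split => [/memX | ]; first by rewrite in_cons => /orP [/eqP -> | zl]; [right | left].
  by case => [z' zl | z' []]; apply/memX; rewrite in_cons ?eqxx // zl orbT.
by apply: card_add; [exact: IH | move=> /= xl; rewrite /In xl in x_notin].
Qed.

End FiniteEnsembles.

Section ProductEnsembles.
Variable G : Group.
Implicit Types A B C : Ensemble G.

Lemma setmul_sub_setmul3 A B C : In G C one -> Included G (setmul A B) (setmul3 A B C).
Proof. by move=> C1 _ [x [y [Ax [By ->]]]]; exists x, y, one; rewrite mulg1. Qed.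

Lemma setmul3_list A B C (lA lB lC : seq G) :
  (forall x, In G A x <-> x \in lA) -> (forall y, In G B y <-> y \in lB) ->
  (forall z, In G C z <-> z \in lC) ->
  forall w, In G (setmul3 A B C) w <->
            w \in [seq p ** z | p <- [seq x ** y | x <- lA, y <- lB], z <- lC].
Proof.
move=> memA memB memC w; split.
  case=> [x [y [z [/memA Ax [/memB By [/memC Cz ->]]]]]].
  by apply/allpairsP; exists (x ** y, z); split => //; apply/allpairsP; exists (x, y).
case/allpairsP => [[p z] [/allpairsP [[x y] [/= /memA Ax /memB By ->]] /= /memC Cz ->]].
by exists x, y, z.
Qed.

(* If ABC is not contained in AB, some w = abc lies outside AB; with e := bc,
   A(B u {e}) lies in ABC and the translated Scherk theorem applies. *)
Lemma setmul3_large A B C :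
  Finite G A -> Finite G B -> Finite G C -> In G C one ->
  ~ Included G (setmul3 A B C) (setmul A B) ->
  exists n a b : nat, [/\ cardinal G (setmul3 A B C) n, cardinal G A a,
                          cardinal G B b & (a + b <= n)%coq_nat].
Proof.
move=> finA finB finC C1 not_sub.
have [lA [lA_uniq memA]] := finite_list finA.
have [lB [lB_uniq memB]] := finite_list finB.
have [lC [lC_uniq memC]] := finite_list finC.
pose W := undup [seq p ** z | p <- [seq x ** y | x <- lA, y <- lB], z <- lC].
have memW w : In G (setmul3 A B C) w <-> w \in W.
  by rewrite mem_undup; exact: setmul3_list.
have [w w_in w_notin] : exists2 w, In G (setmul3 A B C) w & ~ In G (setmul A B) w.
  by apply: NNPP => none; apply: not_sub => w w_in; apply: NNPP => w_out; apply: none; exists w.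
case: w_in w_notin => a [b [c [Aa [Bb [Cc ->]]]]] abc_notin.
exists (size W), (size lA), (size lB); split.
- exact: list_cardinal (undup_uniq _) memW.
- exact: list_cardinal lA_uniq memA.
- exact: list_cardinal lB_uniq memB.
- apply/leP; apply: (scherk_extension (a := a) (e := b ** c) lA_uniq lB_uniq); first exact/memA.
  + move=> x y /memA Ax; rewrite in_cons => /orP [/eqP -> | /memB By]; apply/memW.
      by exists x, b, c; rewrite mulA.
    by exists x, y, one; rewrite mulg1.
  + move=> x y /memA Ax /memB By; apply/eqP => xy; apply: abc_notin.
    by exists x, y; rewrite xy mulA.
Qed.

End ProductEnsembles.

End Scherk.

Theorem mainTheorem1 (G : Group) (A B C : Ensemble G)
  (hAf : Finite G A) (hBf : Finite G B) (hCf : Finite G C)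
  (hAne : nonempty A) (hBne : nonempty B) (hCne : nonempty C)
  (hBC : Included G B C) (h1C : In G C (gone G)) :
  Same_set G (setmul3 A B C) (setmul A B) \/
  (exists n a b : nat, cardinal G (setmul3 A B C) n /\ cardinal G A a /\
     cardinal G B b /\ a + b <= n).
Proof.
destruct (classic (Included G (setmul3 A B C) (setmul A B))) as [sub | not_sub].
- left. split; [exact sub | exact (Scherk.setmul_sub_setmul3 h1C)].
- right.
  destruct (Scherk.setmul3_large hAf hBf hCf h1C not_sub) as (n & a & b & [hn ha hb le_ab]).
  exists n, a, b. auto.
Qed.
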